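(* The scalar curvature $r=\langle G,{\rm Ric}\rangle_{\mathcal{B}}$ is constant, given by \[ r=\frac{[2]_q}{q^2+q^{-2}}(q^{-6}+q^6)=[2]_q(1+(q^{-2}-q^2)^2), \] and as $q\to 1$ the scalar curvature converges to 2.
   Context: $\mathcal{B}=\mathcal{O}(S^2_q)$, $q\in(0,1]$, $[x]_q=\frac{q^{-x}-q^x}{q^{-1}-q}$. With the exact frame $\omega_j=(-1)^{1-j}\begin{pmatrix}0&q^{1/2}(t^1_{2-j,-1})^*\\ q^{-1/2}(t^1_{2-j,1})^*&0\end{pmatrix}$ ($j=1,2,3$) of the one-forms of the Dabrowski--Sitarz spectral triple, right inner product $\langle\rho,\eta\rangle_{\mathcal{B}}=\mathrm{Tr}(\mathrm{diag}(q,q^{-1})\rho^*\eta)$ and line element $G=\sum_j\omega_j\otimes\omega_j^\dagger$, the Ricci curvature of the Levi-Civita connection is ${\rm Ric}=\frac{[2]_q}{q^2+q^{-2}}\,\omega_i\otimes\mathrm{diag}(q^{-4},q^4)\,\omega_i^\dagger$. *)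

From HB Require Import structures.
From mathcomp Require Import all_boot all_order all_algebra.
From mathcomp Require Import all_classical all_reals all_analysis.
Set Implicit Arguments. Unset Strict Implicit. Unset Printing Implicit Defensive.
Import Order.TTheory GRing.Theory Num.Theory.
Local Open Scope ring_scope.

Section Podles.
Variables (R : realType) (A : algType R).

Definition qnum (x : nat) (q : R) : R :=
  if q == 1 then x%:R else (q ^- x - q ^+ x) / (q^-1 - q).

Definition is_star (s : A -> A) : Prop :=
  [/\ involutive s,
      forall x y, s (x + y) = s x + s y,
      forall x y, s (x * y) = s y * s x
    & forall (k : R) x, s (k *: x) = k *: s x].

(* defining relations of O(SU_q(2)) (Woronowicz), u = [[a, -q c^*],[c, a^*]] *)
Definition suq2_rel (s : A -> A) (q : R) (a c : A) : Prop :=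
  [/\ s a * a + s c * c = 1,
      a * s a + q ^+ 2 *: (c * s c) = 1,
      c * s c = s c * c,
      a * c = q *: (c * a)
    & a * s c = q *: (s c * a)].

Definition ufund (s : A -> A) (q : R) (a c : A) : 'M[A]_2 :=
  \matrix_(i < 2, j < 2)
    if (i == 0 :> nat) then (if (j == 0 :> nat) then a else - (q *: s c))
    else (if (j == 0 :> nat) then c else s a).

(* orthonormal basis f_1, f_0, f_{-1} of the spin-1 (q-symmetric) subspace of C^2 (x) C^2:
   f_1 = e_1(x)e_1, f_0 = (q e_1(x)e_2 + e_2(x)e_1)/sqrt(1+q^2), f_{-1} = e_2(x)e_2 *)
Definition fspin1 (q : R) (m : int) (i j : 'I_2) : R :=
  if m == 1 then (if (i == 0 :> nat) && (j == 0 :> nat) then 1 else 0)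
  else if m == 0 then
    (if (i == 0 :> nat) && (j == 1 :> nat) then q / Num.sqrt (1 + q ^+ 2)
     else if (i == 1 :> nat) && (j == 0 :> nat) then (Num.sqrt (1 + q ^+ 2))^-1
     else 0)
  else if m == -1 then (if (i == 1 :> nat) && (j == 1 :> nat) then 1 else 0)
  else 0.

(* matrix coefficients t^1_{m n} (m, n in {-1,0,1}) of the spin-1 unitary corepresentation,
   as the restriction of u (x) u (entries u_ik u_jl) to the spin-1 subspace *)
Definition t1 (s : A -> A) (q : R) (a c : A) (m n : int) : A :=
  \sum_(i < 2) \sum_(j < 2) \sum_(k < 2) \sum_(l < 2)
     (fspin1 q m i j * fspin1 q n k l) *: (ufund s q a c i k * ufund s q a c j l).

Definition adjm (s : A -> A) (X : 'M[A]_2) : 'M[A]_2 := \matrix_(i, j) s (X j i).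

Definition rdiag (x y : R) : 'M[A]_2 :=
  \matrix_(i < 2, j < 2) if i == j then (if (i == 0 :> nat) then x%:A else y%:A) else 0.

(* the frame omega_j, j = 1,2,3 (here indexed by j : 'I_3, paper index j+1):
   omega_j = (-1)^{1-j} [[0, q^{1/2} (t^1_{2-j,-1})^*],[q^{-1/2} (t^1_{2-j,1})^*, 0]] *)
Definition omega (s : A -> A) (q : R) (a c : A) (j : 'I_3) : 'M[A]_2 :=
  let jp : int := (j : nat)%:Z + 1 in
  let sg : R := (-1) ^+ (j : nat) in  (* = (-1)^(1 - jp) *)
  \matrix_(r < 2, k < 2)
    if (r == 0 :> nat) && (k == 1 :> nat) then
      (sg * Num.sqrt q) *: s (t1 s q a c (2 - jp) (-1))
    else if (r == 1 :> nat) && (k == 0 :> nat) then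
      (sg / Num.sqrt q) *: s (t1 s q a c (2 - jp) 1)
    else 0.

Definition inner1 (s : A -> A) (q : R) (X Y : 'M[A]_2) : A :=
  \tr (rdiag q q^-1 *m (adjm s X *m Y)).

(* inner product on Omega^1 (x)_B Omega^1:
   <rho1 (x) rho2, eta1 (x) eta2> = <rho2, <rho1, eta1> eta2>,
   extended additively to (formal) sums of simple tensors *)
Definition inner2 (s : A -> A) (q : R) (X Y : seq ('M[A]_2 * 'M[A]_2)) : A :=
  \sum_(x <- X) \sum_(y <- Y)
     inner1 s q x.2 ((inner1 s q x.1 y.1)%:M *m y.2).

Definition lineG (s : A -> A) (q : R) (a c : A) : seq ('M[A]_2 * 'M[A]_2) :=
  [seq (omega s q a c j, adjm s (omega s q a c j)) | j <- enum 'I_3].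

Definition Ricci (s : A -> A) (q : R) (a c : A) : seq ('M[A]_2 * 'M[A]_2) :=
  [seq (((qnum 2 q / (q ^+ 2 + q ^- 2))%:A : A)%:M *m omega s q a c i,
        rdiag (q ^- 4) (q ^+ 4) *m adjm s (omega s q a c i)) | i <- enum 'I_3].

End Podles.

(* Every frame element omega_j is off-diagonal, [[0, x_j], [y_j, 0]], so the pairing
   <G, Ric> collapses to products of the four sums  sum_j x_j x_j^*,  sum_j y_j y_j^*,
   sum_j x_j y_j^*  and  sum_j y_j x_j^*,  weighted by q^4, q^-4, q^6 and q^-6 (coming from
   diag(q^-4, q^4) and the weights diag(q, q^-1) of the inner product).  Up to the factors
   q^{1/2} and q^{-1/2} these sums are entries of (t^1)^* t^1, and the spin-1
   corepresentation t^1 is unitary, so they equal q, q^-1, 0 and 0.  Hence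
   r = [2]_q / (q^2 + q^-2) * (q^6 + q^-6).  Unitarity is checked entry by entry: the
   q-commutation relations of SU_q(2) turn each entry into a polynomial in the normal element
   c c^* (or c^* c), where the identity is one of real polynomials. *)

From HB Require Import structures.
From mathcomp Require Import all_boot all_order all_algebra.
From mathcomp Require Import all_classical all_reals all_analysis.
From mathcomp Require Import ring.
Set Implicit Arguments. Unset Strict Implicit. Unset Printing Implicit Defensive.
Import Order.TTheory GRing.Theory Num.Theory.
Import numFieldNormedType.Exports.
Local Open Scope classical_set_scope.
Local Open Scope ring_scope.

Lemma qnum2E (R : realType) (q : R) : 0 < q -> qnum 2 q = q + q^-1.
Proof.
move=> q_gt0; rewrite /qnum; have [->|q_neq1] := eqVneq q 1; first by rewrite invr1.
have q_neq0 : q != 0 by rewrite gt_eqF.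
have qVBq_neq0 : q^-1 - q != 0.
  rewrite (_ : q^-1 - q = (1 - q) * (1 + q) / q); last by field.
  by rewrite !mulf_neq0 ?invr_eq0 // ?subr_eq0 1?eq_sym // lt_eqF // addr_gt0.
by rewrite (_ : q ^- 2 - q ^+ 2 = (q + q^-1) * (q^-1 - q)) ?mulfK //; field.
Qed.

Lemma exp6_div_exp2 (R : realFieldType) (q : R) : q != 0 ->
  (q ^- 6 + q ^+ 6) / (q ^+ 2 + q ^- 2) = 1 + (q ^- 2 - q ^+ 2) ^+ 2.
Proof.
move=> q_neq0; have q2_gt0 : 0 < q ^+ 2 by rewrite exprn_even_gt0.
field; rewrite q_neq0 /= gt_eqF // addr_gt0 // mulr_gt0 //.
Qed.

Definition scalar_curvature (R : realType) (q : R) : R :=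
  qnum 2 q / (q ^+ 2 + q ^- 2) * (q ^- 6 + q ^+ 6).

Lemma scalar_curvatureE (R : realType) (q : R) : 0 < q ->
  scalar_curvature q = qnum 2 q * (1 + (q ^- 2 - q ^+ 2) ^+ 2).
Proof. by move=> q_gt0; rewrite /scalar_curvature -mulrA [_^-1 * _]mulrC exp6_div_exp2 ?gt_eqF. Qed.

Lemma scalar_curvature_cvg_left1 (R : realType) :
  scalar_curvature p @[p --> (1 : R)^'-] --> (2 : R).
Proof.
pose h (p : R) := (p + p^-1) * (1 + (p^-2 - p ^+ 2) ^+ 2).
have -> : (2 : R) = h 1 by rewrite /h !expr1n invr1 subrr expr0n /= addr0 mulr1.
have h_near : \forall p \near (1 : R)^'-, h p = scalar_curvature p.
  near=> p; have p_gt0 : 0 < p by near: p; apply: nbhs_left_gt; exact: ltr01.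
  by rewrite scalar_curvatureE // qnum2E.
apply: cvg_trans (near_eq_cvg h_near) _; apply: cvg_at_left_filter.
have XnE n : (fun p : R => p ^+ n) @ (1 : R) --> (1 : R) ^+ n.
  exact: exprn_continuous.
have XNnE n : (fun p : R => p ^- n) @ (1 : R) --> (1 : R) ^- n.
  by apply: cvgV; [rewrite expr1n oner_neq0 | exact: XnE].
rewrite /h; apply: cvgM; first by apply: cvgD; [exact: (XnE 1) | exact: (XNnE 1)].
apply: cvgD; first exact: cvg_cst.
rewrite expr2; under eq_fun do rewrite expr2.
by apply: cvgM; apply: cvgB.
Unshelve. all: by end_near.
Qed.

Section StarAlgebra.
Variables (R : realType) (A : algType R) (s : A -> A).
Hypothesis s_star : is_star s.

Lemma starK : involutive s. Proof. by case: s_star. Qed.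
Lemma starD x y : s (x + y) = s x + s y. Proof. by case: s_star. Qed.
Lemma starM x y : s (x * y) = s y * s x. Proof. by case: s_star. Qed.
Lemma starZ (k : R) x : s (k *: x) = k *: s x. Proof. by case: s_star. Qed.
Lemma star0 : s 0 = 0. Proof. by rewrite -(scale0r 0) starZ !scale0r. Qed.

Definition offdiag (x y : A) : 'M[A]_2 :=
  \matrix_(i < 2, j < 2)
    if (i == 0 :> nat) && (j == 1 :> nat) then x
    else if (i == 1 :> nat) && (j == 0 :> nat) then y else 0.

Lemma adjm_offdiag x y : adjm s (offdiag x y) = offdiag (s y) (s x).
Proof. by apply/matrixP => -[[|[|i]] ?] [[|[|j]] ?]; rewrite !mxE ?star0. Qed.

Lemma mul_rdiag_offdiag (u v : R) x y :
  rdiag A u v *m offdiag x y = offdiag (u *: x) (v *: y).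
Proof.
apply/matrixP => -[[|[|i]] ?] [[|[|j]] ?];
  by rewrite !mxE !big_ord_recl big_ord0 !mxE /= ?(mul0r, mulr0, addr0, add0r, mulr_algl).
Qed.

Lemma mul_scalar_offdiag (k x y : A) : k%:M *m offdiag x y = offdiag (k * x) (k * y).
Proof.
by rewrite mul_scalar_mx; apply/matrixP => -[[|[|i]] ?] [[|[|j]] ?]; rewrite !mxE ?mulr0.
Qed.

Lemma inner1_offdiag (q : R) x y x' y' :
  inner1 s q (offdiag x y) (offdiag x' y') = q *: (s y * y') + q^-1 *: (s x * x').
Proof.
rewrite /inner1 adjm_offdiag mulmxA mul_rdiag_offdiag /mxtrace.
rewrite !big_ord_recl !big_ord0 !mxE !big_ord_recl !big_ord0 !mxE /=.
by rewrite ?(mul0r, mulr0, addr0, add0r) -!scalerAl.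
Qed.

Lemma inner1_adjm_offdiag (q K u v : R) x y x' y' : q != 0 ->
  inner1 s q (adjm s (offdiag x y))
    ((inner1 s q (offdiag x y) ((K%:A : A)%:M *m offdiag x' y'))%:M *m
       (rdiag A u v *m adjm s (offdiag x' y'))) =
  (K * q ^+ 2 * v) *: (x * s y * (y' * s x')) + (K * v) *: (x * s x * (x' * s x'))
  + (K * u) *: (y * s y * (y' * s y')) + (K * u / q ^+ 2) *: (y * s x * (x' * s y')).
Proof.
move=> q_neq0.
rewrite mul_scalar_offdiag !adjm_offdiag mul_rdiag_offdiag inner1_offdiag.
rewrite mul_scalar_offdiag inner1_offdiag !starK !mulr_algl.
(* restricted to A: R is also a module over itself, and the scalar coefficients must stay
   products for [field] *)
rewrite !(mulrDl, mulrDr, scalerDr) -!(@scalerAl _ A, @scalerAr _ A) !(@scalerA _ A).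
by rewrite !mulrA !addrA; congr (_ *: _ + _ *: _ + _ *: _ + _ *: _); field.
Qed.

(* The expressions below live in the commutative subalgebra generated by a single element
   m of the noncommutative algebra A: we reify both sides as polynomials over R and transport
   the identity, proved by [ring] in {poly R}, along the algebra morphism [horner_alg m]. *)
Ltac reify_poly m t :=
  lazymatch t with
  | m => constr:('X : {poly R})
  | 1 => constr:(1 : {poly R})
  | 0 => constr:(0 : {poly R})
  | ?x + ?y => let u := reify_poly m x in let v := reify_poly m y in constr:(u + v)
  | - ?x => let u := reify_poly m x in constr:(- u)
  | ?x * ?y => let u := reify_poly m x in let v := reify_poly m y in constr:(u * v)
  | ?k *: ?x => let u := reify_poly m x in constr:(k%:P * u)
  end.

Ltac horner_alg_expand m :=
  rewrite ?(rmorphD (horner_alg m), rmorphN (horner_alg m), rmorphM (horner_alg m),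
            rmorph1 (horner_alg m), rmorph0 (horner_alg m)) /=;
  rewrite ?horner_algC ?horner_algX ?mulr_algl.

Ltac poly_identity m0 :=
  let m := fresh "m" in set m := m0;
  lazymatch goal with |- ?l = ?r =>
    let pl := reify_poly m l in let pr := reify_poly m r in
    transitivity (horner_alg m pl); [by horner_alg_expand m |];
    transitivity (horner_alg m pr); [| by horner_alg_expand m];
    apply: congr1; ring
  end.

Section SUq2.
Variables (q : R) (a c : A).
Hypotheses (q_neq0 : q != 0) (hrel : suq2_rel s q a c).

Lemma adj_a_a : s a * a = 1 - s c * c.
Proof. by case: hrel => <- *; rewrite addrK. Qed.
Lemma a_adj_a : a * s a = 1 - q ^+ 2 *: (c * s c).
Proof. by case: hrel => _ <- *; rewrite addrK. Qed.
Lemma c_normal : c * s c = s c * c. Proof. by case: hrel. Qed.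
Lemma a_c : a * c = q *: (c * a). Proof. by case: hrel. Qed.
Lemma a_adj_c : a * s c = q *: (s c * a). Proof. by case: hrel. Qed.
Lemma adj_c_adj_a : s c * s a = q *: (s a * s c).
Proof. by rewrite -!starM a_c starZ. Qed.
Lemma c_adj_a : c * s a = q *: (s a * c).
Proof. by rewrite -{1}(starK c) -starM a_adj_c starZ starM starK. Qed.

Local Notation t := (t1 s q a c).
Local Notation nq := (Num.sqrt (1 + q ^+ 2)).

Lemma nq_mul_nq : nq * nq = 1 + q ^+ 2.
Proof. by rewrite -expr2 sqr_sqrtr // addr_ge0 // sqr_ge0. Qed.
Lemma nq_neq0 : nq != 0.
Proof. by rewrite gt_eqF // sqrtr_gt0 addr_gt0 // exprn_even_gt0. Qed.

Ltac t1_expand :=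
  rewrite /t1 !big_ord_recl !big_ord0 /fspin1 /ufund !mxE /=;
  rewrite ?(mul0r, mulr0, mul1r, mulr1, scale0r, scale1r, add0r, addr0).

Lemma t1_1N1E : t 1 (-1) = q ^+ 2 *: (s c * s c).
Proof. by t1_expand; rewrite mulrNN -scalerAl -scalerAr scalerA. Qed.
Lemma t1_0N1E : t 0 (-1) = - (q * nq) *: (s a * s c).
Proof.
t1_expand; rewrite mulNr mulrN -!scalerAl -!scalerAr adj_c_adj_a !(scalerA, scalerN).
rewrite -opprD -scalerDl scaleNr; congr (- (_ *: _)).
rewrite -[RHS](mulfK nq_neq0) -[q * nq * nq]mulrA nq_mul_nq.
by field; rewrite nq_neq0.
Qed.
Lemma t1_N1N1E : t (-1) (-1) = s a * s a. Proof. by t1_expand. Qed.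
Lemma t1_11E : t 1 1 = a * a. Proof. by t1_expand. Qed.
Lemma t1_01E : t 0 1 = (nq / q) *: (a * c).
Proof.
t1_expand; rewrite [c * a](_ : _ = q^-1 *: (a * c)); last first.
  by rewrite a_c scalerA mulVf // scale1r.
rewrite !scalerA -scalerDl; congr (_ *: _).
rewrite -[RHS](mulfK nq_neq0) [nq / q * nq]mulrAC nq_mul_nq.
by field; rewrite nq_neq0.
Qed.
Lemma t1_N11E : t (-1) 1 = c * c. Proof. by t1_expand. Qed.

Local Notation m := (c * s c).
Local Notation p := (s c * c).

Lemma cc_adj_cc : c * c * (s c * s c) = m * m.
Proof. by rewrite mulrA [RHS]mulrA -[c * s c * c]mulrA -c_normal mulrA. Qed.
Lemma ca_adj_ca : c * a * (s a * s c) = m - q ^+ 2 *: (m * m).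
Proof.
rewrite mulrA -[c * a * s a]mulrA a_adj_a mulrBr mulr1 mulrBl -scalerAr -scalerAl.
by rewrite -cc_adj_cc !mulrA.
Qed.
Lemma a_m : a * m = q ^+ 2 *: (m * a).
Proof.
rewrite mulrA a_c -scalerAl -[c * a * s c]mulrA a_adj_c -scalerAr scalerA.
by rewrite mulrA.
Qed.
Lemma aa_adj_aa :
  a * a * (s a * s a) = 1 - q ^+ 2 *: m - q ^+ 4 *: (m * (1 - q ^+ 2 *: m)).
Proof.
rewrite mulrA -[a * a * s a]mulrA a_adj_a mulrBr mulr1 mulrBl a_adj_a -scalerAr -scalerAl.
by rewrite a_m -scalerAl -[m * a * s a]mulrA a_adj_a scalerA -exprD.
Qed.

Lemma adj_cc_cc : s c * s c * (c * c) = p * p.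
Proof. by rewrite mulrA [RHS]mulrA -[s c * c * s c]mulrA c_normal mulrA. Qed.
Lemma adj_ca_ca : s c * s a * (a * c) = p - p * p.
Proof.
rewrite mulrA -[s c * s a * a]mulrA adj_a_a mulrBr mulr1 mulrBl.
by rewrite -adj_cc_cc !mulrA.
Qed.
Lemma p_adj_a : p * s a = q ^+ 2 *: (s a * p).
Proof.
rewrite -mulrA c_adj_a -scalerAr [s c * (s a * c)]mulrA adj_c_adj_a -scalerAl scalerA.
by rewrite mulrA.
Qed.
Lemma adj_a_p : s a * p = q ^- 2 *: (p * s a).
Proof. by rewrite p_adj_a scalerA mulVf ?scale1r // expf_neq0. Qed.
Lemma adj_aa_aa : s a * s a * (a * a) = 1 - p - q ^- 2 *: (p * (1 - p)).
Proof.
rewrite mulrA -[s a * s a * a]mulrA adj_a_a mulrBr mulr1 mulrBl adj_a_a adj_a_p.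
by rewrite -scalerAl -[p * s a * a]mulrA adj_a_a.
Qed.

Definition t1_adj_mul (n n' : int) : A :=
  \sum_(k <- [:: 1; 0; -1] : seq int) s (t k n) * t k n'.

Lemma t1_adj_mul_enum n n' :
  \sum_(j <- enum 'I_3) s (t (2 - ((j : nat)%:Z + 1)) n) * t (2 - ((j : nat)%:Z + 1)) n'
  = t1_adj_mul n n'.
Proof.
rewrite -(big_map (fun j : 'I_3 => 2 - ((j : nat)%:Z + 1)) xpredT (fun k => s (t k n) * t k n')).
have -> : [seq 2 - ((j : nat)%:Z + 1) | j : 'I_3 <- enum 'I_3] = [:: 1; 0; -1].
  by rewrite (map_comp (fun k : nat => 2 - (k%:Z + 1)) val) val_enum_ord.
by [].
Qed.

Lemma t1_adj_mulNN : t1_adj_mul (-1) (-1) = 1.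
Proof.
rewrite /t1_adj_mul !big_cons big_nil addr0 addrA t1_1N1E t1_0N1E t1_N1N1E.
rewrite !(starZ, starM, starK) -!(scalerAl, scalerAr) !scalerA.
rewrite cc_adj_cc ca_adj_ca aa_adj_aa mulrNN [q * nq * _]mulrACA nq_mul_nq.
poly_identity (c * s c).
Qed.

Lemma t1_adj_mul11 : t1_adj_mul 1 1 = 1.
Proof.
rewrite /t1_adj_mul !big_cons big_nil addr0 addrA t1_11E t1_01E t1_N11E.
rewrite !(starZ, starM) -!(scalerAl, scalerAr) !scalerA adj_aa_aa adj_ca_ca adj_cc_cc.
rewrite (_ : nq / q * (nq / q) = q^-1 ^+ 2 + 1) -?exprVn; last first.
  by rewrite mulrACA nq_mul_nq; field.
poly_identity (s c * c).
Qed.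

Lemma ca_ac : c * a * (a * c) = q ^+ 2 *: (c * c * (a * a)).
Proof.
rewrite -!mulrA a_c -!scalerAr [a * (c * a)]mulrA a_c -scalerAl -!scalerAr scalerA.
by rewrite !mulrA.
Qed.
Lemma a_cc : a * (c * c) = q ^+ 2 *: (c * c * a).
Proof.
rewrite mulrA a_c -scalerAl -[c * a * c]mulrA a_c -scalerAr scalerA.
by rewrite mulrA.
Qed.
Lemma aa_cc : a * a * (c * c) = q ^+ 4 *: (c * c * (a * a)).
Proof.
rewrite -[a * a * _]mulrA a_cc -scalerAr [a * (c * c * a)]mulrA a_cc -scalerAl scalerA -exprD.
by rewrite !mulrA.
Qed.

Lemma t1_adj_mulN1 : t1_adj_mul (-1) 1 = 0.
Proof.
rewrite /t1_adj_mul !big_cons big_nil addr0 addrA t1_1N1E t1_0N1E t1_N1N1E.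
rewrite t1_11E t1_01E t1_N11E.
rewrite !(starZ, starM, starK) -!(scalerAl, scalerAr) !scalerA ca_ac aa_cc.
rewrite (_ : - (q * nq) * (nq / q) = - (1 + q ^+ 2)); last first.
  by rewrite mulNr [nq / q]mulrC mulrACA mulfV // mul1r nq_mul_nq.
poly_identity (c * c * (a * a)).
Qed.

Lemma t1_adj_mul_adj n n' : s (t1_adj_mul n n') = t1_adj_mul n' n.
Proof. by rewrite /t1_adj_mul !big_cons !big_nil !starD star0 !starM !starK. Qed.

End SUq2.

Lemma big_scale_mul (I : Type) (r : seq I) (k : R) (u v : I -> A) :
  \sum_(i <- r) \sum_(j <- r) k *: (u i * v j)
  = k *: ((\sum_(i <- r) u i) * \sum_(j <- r) v j).
Proof.
rewrite mulr_suml scaler_sumr; apply: eq_bigr => i _.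
by rewrite mulr_sumr scaler_sumr.
Qed.

Lemma scale_sign_mul_adj (n : nat) (k l : R) (u v : A) :
  ((-1) ^+ n * k) *: u * s (((-1) ^+ n * l) *: v) = (k * l) *: (u * s v).
Proof. by rewrite starZ -scalerAl -scalerAr scalerA mulrACA -expr2 sqrr_sign mul1r. Qed.

Section Frame.
Variables (q : R) (a c : A).
Hypotheses (q_gt0 : 0 < q) (hrel : suq2_rel s q a c).
Let q_neq0 : q != 0 := lt0r_neq0 q_gt0.

Definition frame_x (j : 'I_3) : A :=
  ((-1) ^+ j * Num.sqrt q) *: s (t1 s q a c (2 - ((j : nat)%:Z + 1)) (-1)).
Definition frame_y (j : 'I_3) : A :=
  ((-1) ^+ j / Num.sqrt q) *: s (t1 s q a c (2 - ((j : nat)%:Z + 1)) 1).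

Lemma omegaE j : omega s q a c j = offdiag (frame_x j) (frame_y j).
Proof. by []. Qed.

Lemma sqrt_mul_sqrt : Num.sqrt q * Num.sqrt q = q.
Proof. by rewrite -expr2 sqr_sqrtr // ltW. Qed.

Lemma sum_frame_x_adj_x : \sum_(j <- enum 'I_3) frame_x j * s (frame_x j) = q%:A.
Proof.
under eq_bigr do rewrite scale_sign_mul_adj sqrt_mul_sqrt starK.
by rewrite -scaler_sumr t1_adj_mul_enum t1_adj_mulNN.
Qed.

Lemma sum_frame_y_adj_y : \sum_(j <- enum 'I_3) frame_y j * s (frame_y j) = q^-1%:A.
Proof.
under eq_bigr do rewrite scale_sign_mul_adj -invfM sqrt_mul_sqrt starK.
by rewrite -scaler_sumr t1_adj_mul_enum t1_adj_mul11.
Qed.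

Lemma sum_frame_x_adj_y : \sum_(j <- enum 'I_3) frame_x j * s (frame_y j) = 0.
Proof.
under eq_bigr do rewrite scale_sign_mul_adj mulfV ?sqrtr_eq0 ?lt_geF // scale1r starK.
by rewrite t1_adj_mul_enum t1_adj_mulN1.
Qed.

Lemma sum_frame_y_adj_x : \sum_(j <- enum 'I_3) frame_y j * s (frame_x j) = 0.
Proof.
under eq_bigr do rewrite scale_sign_mul_adj mulVf ?sqrtr_eq0 ?lt_geF // scale1r starK.
by rewrite t1_adj_mul_enum -t1_adj_mul_adj t1_adj_mulN1 // star0.
Qed.

Lemma inner2_lineG_Ricci :
  inner2 s q (lineG s q a c) (Ricci s q a c) = (scalar_curvature q)%:A.
Proof.
rewrite /inner2 /lineG /Ricci big_map.
under eq_bigr => j _ do rewrite big_map.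
under eq_bigr => j _ do under eq_bigr => i _ do rewrite !omegaE inner1_adjm_offdiag //.
under eq_bigr => j _ do rewrite !big_split.
rewrite !big_split !big_scale_mul.
rewrite sum_frame_x_adj_x sum_frame_y_adj_y sum_frame_x_adj_y sum_frame_y_adj_x /=.
rewrite !mulr0 !scaler0 add0r addr0 !mulr_algl !(@scalerA _ A) -scalerDl.
congr (_ *: _); rewrite /scalar_curvature.
by field; rewrite q_neq0 lt0r_neq0 // ltr_wpDl ?sqr_ge0.
Qed.

End Frame.
End StarAlgebra.

Theorem mainTheorem8 (R : realType) (A : algType R) (s : A -> A) (q : R) (a c : A)
  (hs : is_star s) (hq0 : 0 < q) (hq1 : q <= 1) (hrel : suq2_rel s q a c) :
  inner2 s q (lineG s q a c) (Ricci s q a c)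
    = (qnum 2 q / (q ^+ 2 + q ^- 2) * (q ^- 6 + q ^+ 6)) %:A
  /\ qnum 2 q / (q ^+ 2 + q ^- 2) * (q ^- 6 + q ^+ 6)
       = qnum 2 q * (1 + (q ^- 2 - q ^+ 2) ^+ 2)
  /\ (qnum 2 p / (p ^+ 2 + p ^- 2) * (p ^- 6 + p ^+ 6)) @[p --> (1 : R)^'-] --> (2 : R).
Proof.
split; first exact: inner2_lineG_Ricci.
split; first exact: scalar_curvatureE.
exact: scalar_curvature_cvg_left1.
Qed.
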